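(* Let $n\ge 2$, $0<p<q$ be real numbers and let $A$ be the $n\times n$ matrix with columns $a_k=q e_k-p e_{k+1}$ ($1\le k\le n-1$) and $a_n=q e_n+p e_1$. Let $S=(s_{i,j})_{i,j=1}^n$ be a signed permutation matrix, i.e. $S\in\{0,\pm1\}^{n\times n}$ and every row and every column of $S$ contains exactly one nonzero entry. Then $S(A\mathbb{Z}^n)=A\mathbb{Z}^n$ if and only if all of the following hold: $s_{i,j}=s_{i+1,j+1}$ for all $i,j<n$; $s_{i,n}=-s_{i+1,1}$ and $s_{n,j}=-s_{1,j+1}$ for all $i,j<n$; and $s_{n,n}=s_{1,1}$.
   Context: $e_i$ denotes the $i$-th standard unit vector of $\mathbb{R}^n$. *)

From HB Require Import structures.
From mathcomp Require Import all_boot all_order all_algebra.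
From mathcomp Require Import reals.
Set Implicit Arguments. Unset Strict Implicit. Unset Printing Implicit Defensive.
Import Order.TTheory GRing.Theory Num.Theory.
Local Open Scope ring_scope.

(* Indices are 0-based: paper index k corresponds to ordinal k-1. *)

(* The matrix A whose k-th column is q e_k - p e_{k+1} for k < n (1-based)
   and whose n-th column is q e_n + p e_1. *)
Definition Amx (R : ringType) (n : nat) (p q : R) : 'M[R]_n :=
  \matrix_(i < n, j < n)
    ((if i == j then q else 0)
     - (if (j.+1 < n)%N && (val i == j.+1) then p else 0)
     + (if (val j == n.-1) && (val i == 0%N) then p else 0)).

Definition lattice (R : ringType) (n : nat) (B : 'M[R]_n) : 'cV[R]_n -> Prop :=
  fun x => exists z : 'cV[int]_n, x = B *m map_mx (fun k : int => k%:~R) z.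

Definition mx_image (R : ringType) (n : nat) (S : 'M[R]_n)
  (L : 'cV[R]_n -> Prop) : 'cV[R]_n -> Prop :=
  fun x => exists y, L y /\ x = S *m y.

Definition signed_perm_mx (R : ringType) (n : nat) (S : 'M[R]_n) : Prop :=
  (forall i j, S i j \in [:: 0; 1; -1]) /\
  (forall i, #|[set j | S i j != 0]| = 1%N) /\
  (forall j, #|[set i | S i j != 0]| = 1%N).

From HB Require Import structures.
From mathcomp Require Import all_boot all_order all_algebra.
From mathcomp Require Import reals.
From mathcomp Require Import ring lra zify.
Import Order.TTheory GRing.Theory Num.Theory.
Set Implicit Arguments. Unset Strict Implicit. Unset Printing Implicit Defensive.
Local Open Scope ring_scope.

(* A = q I - p C, where C is the negacyclic shift e_k |-> e_(k+1), e_n |-> -e_1;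
   C is orthogonal and the conditions on S say exactly that S commutes with C.
   If it does, S commutes with A, and S, an integral matrix with integral
   inverse S^T, preserves A Z^n.  Conversely, if S preserves the lattice, then
   S a_k = A w for an integral w with |A w|^2 = |a_k|^2 = p^2 + q^2.  As C is
   orthogonal, |A w|^2 = (q - p)^2 |w|^2 + p q |w - C w|^2, where |w - C w|^2
   is an even integer, nonzero for w <> 0 since C has no nonzero fixed vector.
   Hence |w|^2 = 1, so S a_k = +-a_m; comparing the entries of size q and p of
   S a_k = q S e_k - p S C e_k and of +-a_m = +-(q e_m - p C e_m) then gives
   S C e_k = C S e_k. *)

Section NegacyclicShift.
Variable n : nat.

Definition negacyclic_sign (R : pzRingType) (j : 'I_n) : R :=
  if (j.+1 < n)%N then 1 else -1.

Definition negacyclic_mx (R : pzRingType) : 'M[R]_n :=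
  \matrix_(i, j) (negacyclic_sign R j * (i == ordS j)%:R).

Lemma ordS_succ (i i' : 'I_n) : val i' = (val i).+1 -> ordS i = i'.
Proof. by move=> /= ii'; apply/val_inj; rewrite /= modn_small // -ii'. Qed.

Lemma ordS_last (l f : 'I_n) : val l = n.-1 -> val f = 0%N -> ordS l = f.
Proof.
move=> ln f0; apply/val_inj; rewrite /= ln f0 prednK ?modnn //.
by apply: leq_ltn_trans (ltn_ord l).
Qed.

Lemma negacyclic_sign_succ (R : pzRingType) (i i' : 'I_n) :
  val i' = (val i).+1 -> negacyclic_sign R i = 1.
Proof. by move=> ii'; rewrite /negacyclic_sign -ii' ltn_ord. Qed.

Lemma negacyclic_sign_last (R : pzRingType) (l : 'I_n) :
  val l = n.-1 -> negacyclic_sign R l = -1.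
Proof. by move=> ln; rewrite /negacyclic_sign ln prednK ?ltnn // (leq_ltn_trans _ (ltn_ord l)). Qed.

Lemma ordS_cases (R : pzRingType) (i : 'I_n) :
  (val (ordS i) = (val i).+1 /\ negacyclic_sign R i = 1) \/
  (val i = n.-1 /\ val (ordS i) = 0%N).
Proof.
have [lt_in|ge_in] := ltnP i.+1 n; [left | right].
  by rewrite /negacyclic_sign lt_in /= modn_small.
by have := ltn_ord i; split=> /=; [lia | rewrite (_ : i.+1 = n) ?modnn //; lia].
Qed.

Lemma ordS_neq (i : 'I_n) : (1 < n)%N -> ordS i != i.
Proof.
move=> n_gt1; rewrite -val_eqE.
by have [[-> _]|[-> ->]] := ordS_cases int i; [rewrite (gtn_eqF (ltnSn _)) | lia].
Qed.

Lemma negacyclic_sign_sqr (R : pzRingType) j : negacyclic_sign R j ^+ 2 = 1.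
Proof. by rewrite /negacyclic_sign; case: ifP; rewrite ?sqrrN expr1n. Qed.

Lemma mulmx_negacyclic (R : pzRingType) m (M : 'M[R]_(m, n)) i k :
  (M *m negacyclic_mx R) i k = M i (ordS k) * negacyclic_sign R k.
Proof.
rewrite mxE (bigD1 (ordS k)) //= big1 ?addr0; first by rewrite mxE eqxx mulr1.
by move=> j /negbTE nj; rewrite mxE nj !mulr0.
Qed.

Lemma negacyclic_mulmx (R : pzRingType) m (M : 'M[R]_(n, m)) j k :
  (negacyclic_mx R *m M) (ordS j) k = negacyclic_sign R j * M j k.
Proof.
rewrite mxE (bigD1 j) //= big1 ?addr0; first by rewrite mxE eqxx mulr1.
by move=> j' nj; rewrite mxE (inj_eq (@ordS_inj n)) eq_sym (negbTE nj) mulr0 mul0r.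
Qed.

Lemma negacyclic_mx_delta (R : pzRingType) j :
  negacyclic_mx R *m delta_mx j 0 = negacyclic_sign R j *: delta_mx (ordS j) 0 :> 'cV[R]_n.
Proof.
apply/matrixP => i k; rewrite -(ord_predK i) negacyclic_mulmx !mxE (inj_eq (@ordS_inj n)).
by case: eqVneq => [->|] /=; rewrite ?mulr0.
Qed.

Lemma trmx_negacyclic_mulmx (R : comPzRingType) :
  (negacyclic_mx R)^T *m negacyclic_mx R = 1%:M.
Proof.
apply/matrixP => i j; rewrite mulmx_negacyclic !mxE (inj_eq (@ordS_inj n)).
by case: eqVneq => [->|]; rewrite ?mulr1 -?expr2 ?negacyclic_sign_sqr // mulr0 mul0r.
Qed.

Lemma AmxE (R : nzRingType) (p q : R) : Amx n p q = q%:M - p *: negacyclic_mx R.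
Proof.
apply/matrixP => i j; rewrite !mxE /negacyclic_sign -[i == ordS j]val_eqE /=.
have [lt_jn|ge_jn] := ltnP j.+1 n.
  rewrite modn_small // (_ : (j == n.-1 :> nat) = false) /=; last by lia.
  by case: (i == j); case: (i == j.+1 :> nat);
    rewrite /= ?mul1r ?mulr1 ?mulr0 ?mulr1n ?mulr0n ?subr0 ?addr0.
have j_last : nat_of_ord j = n.-1 by have := ltn_ord j; lia.
rewrite j_last prednK ?modnn ?eqxx; last by apply: leq_ltn_trans (ltn_ord j).
by case: (i == j); case: (i == 0%N :> nat);
  rewrite /= ?mulr1n ?mulr0n ?mulr1 ?mulr0 ?mulN1r ?oppr0 ?subr0 ?addr0 ?mulrN1 ?opprK ?add0r.
Qed.

Lemma col_Amx (R : nzRingType) (p q : R) k :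
  col k (Amx n p q) =
  q *: delta_mx k 0 - p *: (negacyclic_sign R k *: delta_mx (ordS k) 0).
Proof. by rewrite colE AmxE mulmxBl mul_scalar_mx -scalemxAl negacyclic_mx_delta. Qed.

End NegacyclicShift.

Definition sqnorm (R : pzRingType) n (v : 'cV[R]_n) : R := \sum_i v i 0 ^+ 2.

Lemma sqnorm_orthogonal (R : comPzRingType) n (U : 'M[R]_n) v :
  U^T *m U = 1%:M -> sqnorm (U *m v) = sqnorm v.
Proof.
have sqnormE (u : 'cV[R]_n) : sqnorm u = (u^T *m u) 0 0.
  by rewrite mxE; apply: eq_bigr => i _; rewrite !mxE expr2.
by move=> UU; rewrite !sqnormE trmx_mul -mulmxA (mulmxA U^T) UU mul1mx.
Qed.

Lemma sqnorm_delta_pair (R : pzRingType) n (i j : 'I_n) (a b : R) : i != j ->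
  sqnorm (a *: delta_mx i 0 - b *: delta_mx j 0 : 'cV[R]_n) = a ^+ 2 + b ^+ 2.
Proof.
move=> ij; rewrite /sqnorm (bigD1 i) //= (bigD1 j) 1?eq_sym //= big1 ?addr0 => [|k /andP [ki kj]].
  by rewrite !mxE !eqxx (negbTE ij) eq_sym (negbTE ij) /= !mulr1 !mulr0 subr0 sub0r sqrrN.
by rewrite !mxE (negbTE kj) (negbTE ki) !mulr0 subr0 expr0n.
Qed.

Lemma sqnorm_map_int (R : pzRingType) n (w : 'cV[int]_n) :
  sqnorm (map_mx intr w) = (sqnorm w)%:~R :> R.
Proof. by rewrite /sqnorm rmorph_sum; apply: eq_bigr => i _; rewrite mxE rmorphXn. Qed.

Lemma sqnorm_ge0 (R : realDomainType) n (v : 'cV[R]_n) : 0 <= sqnorm v.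
Proof. by apply: sumr_ge0 => i _; apply: sqr_ge0. Qed.

Lemma sqnorm_eq0 (R : realDomainType) n (v : 'cV[R]_n) : sqnorm v = 0 -> v = 0.
Proof.
move=> v0; apply/matrixP => i j; rewrite ord1 !mxE; apply/eqP.
by rewrite -sqrf_eq0; apply/eqP/(psumr_eq0P (fun i _ => sqr_ge0 _) v0).
Qed.

Lemma sqnorm_Amx (R : comNzRingType) n (p q : R) (x : 'cV[R]_n) :
  sqnorm (Amx n p q *m x) =
  (q - p) ^+ 2 * sqnorm x + p * q * sqnorm (x - negacyclic_mx n R *m x).
Proof.
have := sqnorm_orthogonal x (trmx_negacyclic_mulmx n R).
rewrite AmxE mulmxBl mul_scalar_mx -scalemxAl /sqnorm.
set y := negacyclic_mx n R *m x => yx.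
transitivity (\sum_i ((q - p) ^+ 2 * x i 0 ^+ 2 + p * q * (x - y) i 0 ^+ 2
                      + p * (p - q) * (y i 0 ^+ 2 - x i 0 ^+ 2))).
  by apply: eq_bigr => i _; rewrite !mxE; ring.
by rewrite !big_split /= -!mulr_sumr sumrB yx subrr mulr0 addr0.
Qed.

Lemma map_negacyclic_mx (R : nzRingType) n :
  map_mx intr (negacyclic_mx n int) = negacyclic_mx n R.
Proof.
apply/matrixP => i j; rewrite !mxE rmorphM /= rmorph_nat /negacyclic_sign.
by case: ifP; rewrite ?rmorph1 ?rmorphN1.
Qed.

Lemma negacyclic_fixed_eq0 (R : numDomainType) n (w : 'cV[R]_n) :
  negacyclic_mx n R *m w = w -> w = 0.
Proof.
case: n w => [|n] w Cw; first by apply/matrixP => [[]].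
have shift j : w (ordS j) 0 = negacyclic_sign R j * w j 0.
  by rewrite -{1}Cw negacyclic_mulmx.
have const t : (t < n.+1)%N -> w (inord t) 0 = w ord0 0.
  elim: t => [|t IHt] lt_tn; first by congr (w _ 0); apply/val_inj; rewrite /= inordK.
  have val_succ : val (inord t.+1 : 'I_n.+1) = (val (inord t : 'I_n.+1)).+1.
    by rewrite /= !inordK // ltnW.
  by rewrite -(ordS_succ val_succ) shift (negacyclic_sign_succ _ val_succ) mul1r IHt // ltnW.
have w0 : w ord0 0 = 0.
  have := shift ord_max; rewrite (@ordS_last _ ord_max ord0) // negacyclic_sign_last //.
  rewrite mulN1r (_ : ord_max = inord n) ?const //; last by apply/val_inj; rewrite /= inordK.
  by move/eqP; rewrite -subr_eq0 opprK -mulr2n mulrn_eq0 => /eqP.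
apply/matrixP => i j; rewrite ord1 mxE -(inord_val i) const //.
Qed.

Lemma sqnorm_sub_negacyclic_neq1 n (w : 'cV[int]_n) :
  sqnorm (w - negacyclic_mx n int *m w) != 1.
Proof.
(* Modulo 2, x^2 = x and the signs of the shift disappear, so the sum of
   squares reduces to sum w - sum (C w) = 0. *)
have F2_sqr (x : 'F_2) : x ^+ 2 = x by case: x => [[|[|//]] lt_x2]; apply/val_inj.
have F2_sign (j : 'I_n) : negacyclic_sign 'F_2 j = 1.
  by rewrite /negacyclic_sign; case: ifP => // _; apply/val_inj.
apply/negP => /eqP /(congr1 (fun z : int => z%:~R : 'F_2)).
rewrite -sqnorm_map_int map_mxB map_mxM map_negacyclic_mx /sqnorm.
set v := map_mx _ w; set Cv := _ *m v; under eq_bigr do rewrite F2_sqr.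
rewrite (eq_bigr (fun i => v i 0 - Cv i 0)) => [|i _]; last by rewrite [LHS]mxE [X in _ + X]mxE.
rewrite sumrB [X in _ - X](reindex_inj (@ordS_inj n)) /=.
under [X in _ - X]eq_bigr do rewrite negacyclic_mulmx F2_sign mul1r.
by rewrite subrr => /(congr1 val).
Qed.

Lemma sqnorm_int_eq1 n (w : 'cV[int]_n) :
  sqnorm w = 1 -> exists i (e : int), e ^+ 2 = 1 /\ w = e *: delta_mx i 0.
Proof.
move=> w1; have [i wi0|w0] := pickP (fun i => w i 0 != 0); last first.
  by move: w1; rewrite /sqnorm big1 // => i _; move/negbFE/eqP: (w0 i) ->.
have sq_ge0 (j : 'I_n) : j != i -> 0 <= w j 0 ^+ 2 by move=> _; apply: sqr_ge0.
have wi_ge1 : 1 <= w i 0 ^+ 2 by move: wi0; rewrite expr2; move: (w i 0) => x; nia.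
have := sumr_ge0 (index_enum _) sq_ge0; move: w1; rewrite /sqnorm (bigD1 i) //= => w1 rest_ge0.
set rest := \sum_(j | j != i) _ in w1 rest_ge0 *.
have rest0 : rest = 0 by lia.
exists i, (w i 0); split; first by lia.
apply/matrixP => j k; rewrite ord1 !mxE eqxx andbT.
have [->|ji] := eqVneq j i; first by rewrite mulr1.
by rewrite mulr0; apply/eqP; rewrite -sqrf_eq0; apply/eqP/(psumr_eq0P sq_ge0 rest0).
Qed.

Lemma Amx_int_sqnorm_eq1 (R : realFieldType) n (p q : R) (w : 'cV[int]_n) :
  0 < p -> p < q -> sqnorm (Amx n p q *m map_mx intr w) = p ^+ 2 + q ^+ 2 ->
  sqnorm w = 1.
Proof.
move=> p_gt0 lt_pq; rewrite sqnorm_Amx -map_negacyclic_mx -map_mxM -map_mxB.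
rewrite !sqnorm_map_int => key.
have w_neq0 : w != 0.
  apply: contraPneq key => ->; rewrite mulmx0 subr0.
  rewrite (_ : sqnorm 0 = 0) => [|]; last by rewrite /sqnorm big1 // => i _; rewrite mxE expr0n.
  by rewrite !mulr0 addr0 => /esym; nra.
have N_ge1 : 1 <= sqnorm w.
  rewrite -gtz0_ge1 lt_def sqnorm_ge0 andbT.
  by apply: contra_neq w_neq0 => /sqnorm_eq0.
have M_ge2 : 2 <= sqnorm (w - negacyclic_mx n int *m w).
  have int_ge2 (z : int) : 0 <= z -> z != 0 -> z != 1 -> 2 <= z by lia.
  apply: int_ge2; rewrite ?sqnorm_ge0 ?sqnorm_sub_negacyclic_neq1 //.
  apply: contra_neq w_neq0 => /sqnorm_eq0 /eqP; rewrite subr_eq0 eq_sym => /eqP.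
  exact: negacyclic_fixed_eq0.
apply/eqP; rewrite eq_le N_ge1 andbT -(lerz1 R).
rewrite -(ler1z R) in N_ge1; rewrite -(ler_int R) in M_ge2.
move: key N_ge1 M_ge2; move: (sqnorm w)%:~R (sqnorm (w - _))%:~R => N M key N_ge1 M_ge2.
have balance : (q - p) ^+ 2 * (N - 1) = - (p * q * (M - 2)).
  apply/eqP; rewrite -subr_eq0 opprK; apply/eqP.
  by transitivity ((q - p) ^+ 2 * N + p * q * M - (p ^+ 2 + q ^+ 2)); [ring | rewrite key subrr].
have : 0 <= p * q * (M - 2).
  by rewrite !mulr_ge0 ?subr_ge0 // ltW // (lt_trans p_gt0).
by rewrite -oppr_le0 -balance pmulr_rle0 ?subr_le0 // exprn_gt0 // subr_gt0.
Qed.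

Lemma signed_delta_pair_uniq (R : realFieldType) n (p q : R) (a b a' b' : 'I_n)
    (s t s' t' : R) :
  0 < p -> p < q -> a != b -> a' != b' -> s ^+ 2 = 1 -> t' ^+ 2 = 1 ->
  (q * s) *: delta_mx a 0 - (p * t) *: delta_mx b 0
    = (q * s') *: delta_mx a' 0 - (p * t') *: delta_mx b' 0 :> 'cV[R]_n ->
  [/\ a = a', s = s' & t *: delta_mx b 0 = t' *: delta_mx b' 0 :> 'cV[R]_n].
Proof.
move=> p_gt0 lt_pq ab a'b' s2 t'2 eq_vec.
have := congr1 (fun v : 'cV[R]_n => v a 0) eq_vec.
rewrite /= !mxE !eqxx (negbTE ab) /= !andbT mulr1 !mulr0 subr0.
have q_neq0 : q != 0 by rewrite gt_eqF // (lt_trans p_gt0).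
have [a_eq|aa'] := eqVneq a a'; last first.
  rewrite !mulr0 sub0r; case: (a == b'); rewrite /= ?mulr1 ?mulr0 => qs; exfalso.
    have : (q * s) ^+ 2 = (p * t') ^+ 2 by rewrite qs sqrrN.
    by rewrite !exprMn s2 t'2 !mulr1; nra.
  move/eqP: qs; rewrite oppr0 mulf_eq0 (negbTE q_neq0) => /eqP s0.
  by move: s2; rewrite s0 expr0n /= => /esym/eqP; rewrite oner_eq0.
subst a'; rewrite /= mulr1 (negbTE a'b') !mulr0 subr0 => /(mulfI q_neq0) s_eq.
subst s'; split => //.
have p_neq0 : p != 0 by rewrite gt_eqF.
by apply: (scalerI p_neq0); rewrite !scalerA; apply: oppr_inj; apply: (addrI _ eq_vec).
Qed.

Section SignedPermutation.
Variables (R : nzRingType) (n : nat) (S : 'M[R]_n).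
Hypothesis S_signed : signed_perm_mx S.

Lemma signed_perm_entry_sqr i j : S i j != 0 -> S i j ^+ 2 = 1.
Proof.
by case: S_signed => /(_ i j); rewrite !inE => /or3P [] /eqP ->;
  rewrite ?eqxx // ?sqrrN expr1n.
Qed.

Lemma signed_perm_row_uniq i j j' : S i j != 0 -> S i j' != 0 -> j = j'.
Proof.
case: S_signed => _ [/(_ i) /eqP /cards1P [c /setP Sc] _] Sij Sij'.
by move: (Sc j) (Sc j'); rewrite !inE Sij Sij' => /esym/eqP -> /esym/eqP ->.
Qed.

Lemma signed_perm_col_uniq i i' j : S i j != 0 -> S i' j != 0 -> i = i'.
Proof.
case: S_signed => _ [_ /(_ j) /eqP /cards1P [c /setP Sc]] Sij Si'j.
by move: (Sc i) (Sc i'); rewrite !inE Sij Si'j => /esym/eqP -> /esym/eqP ->.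
Qed.

Lemma signed_perm_col_nz j : exists i, S i j != 0.
Proof.
case: S_signed => _ [_ /(_ j) /eqP /cards1P [c /setP Sc]].
by exists c; move: (Sc c); rewrite !inE eqxx.
Qed.

Lemma signed_perm_col j : exists i, S i j != 0 /\ col j S = S i j *: delta_mx i 0.
Proof.
have [i Sij] := signed_perm_col_nz j; exists i; split => //.
apply/matrixP => i' k; rewrite ord1 !mxE eqxx andbT.
have [->|i'i] := eqVneq i' i; first by rewrite mulr1.
rewrite mulr0; apply/eqP; apply: contraNT i'i => Si'j.
by apply/eqP; apply: signed_perm_col_uniq Si'j Sij.
Qed.

Lemma trmx_signed_perm_mulmx : S^T *m S = 1%:M.
Proof.
apply/matrixP => j j'; have [i Sij] := signed_perm_col_nz j.
rewrite !mxE (bigD1 i) //= big1 ?addr0 => [|i' i'i]; last first.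
  rewrite mxE; have -> : S i' j = 0.
    by apply/eqP; apply: contraNT i'i => /signed_perm_col_uniq/(_ Sij) ->.
  by rewrite mul0r.
rewrite mxE; have [<-|jj'] := eqVneq j j'; first by rewrite -expr2 signed_perm_entry_sqr.
have -> : S i j' = 0 by apply/eqP; apply: contraNT jj' => /(signed_perm_row_uniq Sij) ->.
by rewrite mulr0.
Qed.

Lemma signed_perm_int : exists U : 'M[int]_n, S = map_mx intr U.
Proof.
exists (\matrix_(i, j) (if S i j == 0 then 0 else if S i j == 1 then 1 else -1)).
apply/matrixP => i j; rewrite !mxE.
case: S_signed => /(_ i j); rewrite !inE.
have [-> _|_] := eqVneq (S i j) 0; first by rewrite rmorph0.
have [-> _|_ /= /eqP ->] := eqVneq (S i j) 1; first by rewrite rmorph1.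
by rewrite rmorphN1.
Qed.

End SignedPermutation.

Lemma mx_image_lattice_int (R : nzRingType) n (B : 'M[R]_n) (U V : 'M[int]_n) :
  U *m V = 1%:M -> map_mx intr U *m B = B *m map_mx intr U ->
  forall x, mx_image (map_mx intr U) (lattice B) x <-> lattice B x.
Proof.
move=> UV UB x; split.
  by case=> _ [[z ->] ->]; exists (U *m z); rewrite map_mxM !mulmxA UB.
case=> z ->; exists (B *m map_mx intr (V *m z)); split; first by exists (V *m z).
by rewrite mulmxA UB -mulmxA -map_mxM mulmxA UV mul1mx.
Qed.

Definition negacyclic_toeplitz (R : zmodType) n (S : 'M[R]_n) : Prop :=
  [/\ (forall i j i' j' : 'I_n, val i' = (val i).+1 -> val j' = (val j).+1 ->
          S i j = S i' j'),
      (forall i i' l f : 'I_n, val i' = (val i).+1 -> val l = n.-1 ->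
          val f = 0%N -> S i l = - S i' f),
      (forall j j' l f : 'I_n, val j' = (val j).+1 -> val l = n.-1 ->
          val f = 0%N -> S l j = - S f j')
    & (forall l f : 'I_n, val l = n.-1 -> val f = 0%N -> S l l = S f f)].

Lemma negacyclic_commuteP (R : pzRingType) n (S : 'M[R]_n) :
  S *m negacyclic_mx n R = negacyclic_mx n R *m S <-> negacyclic_toeplitz S.
Proof.
have -> : S *m negacyclic_mx n R = negacyclic_mx n R *m S <->
          forall i k, S (ordS i) (ordS k) * negacyclic_sign R k = negacyclic_sign R i * S i k.
  split=> [SC i k | SC]; first by rewrite -mulmx_negacyclic SC negacyclic_mulmx.
  by apply/matrixP => i k; rewrite -(ord_predK i) mulmx_negacyclic negacyclic_mulmx.
split=> [SC | [shift_in shift_col shift_row shift_corner] i k].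
  split=> [i j i' j' ii' jj' | i i' l f ii' ln f0 | j j' l f jj' ln f0 | l f ln f0].
  - have := SC i j; rewrite (ordS_succ ii') (ordS_succ jj').
    by rewrite (negacyclic_sign_succ R ii') (negacyclic_sign_succ R jj') mulr1 mul1r.
  - have := SC i l; rewrite (ordS_succ ii') (ordS_last ln f0).
    by rewrite (negacyclic_sign_succ R ii') (negacyclic_sign_last R ln) mulrN1 mul1r => <-.
  - have := SC l j; rewrite (ordS_succ jj') (ordS_last ln f0).
    rewrite (negacyclic_sign_succ R jj') (negacyclic_sign_last R ln) mulr1 mulN1r.
    by move=> ->; rewrite opprK.
  - have := SC l l; rewrite (ordS_last ln f0) (negacyclic_sign_last R ln) mulrN1 mulN1r.
    by move/oppr_inj.
have [[i_succ si]|[i_last i0]] := ordS_cases R i;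
  have [[k_succ sk]|[k_last k0]] := ordS_cases R k.
- by rewrite si sk mulr1 mul1r (shift_in _ _ _ _ i_succ k_succ).
- by rewrite si (negacyclic_sign_last R k_last) mulrN1 mul1r (shift_col _ _ _ _ i_succ k_last k0).
- rewrite sk (negacyclic_sign_last R i_last) mulr1 mulN1r.
  by rewrite (shift_row _ _ _ _ k_succ i_last i0) opprK.
- have -> : k = i by apply/val_inj; rewrite i_last.
  by rewrite (negacyclic_sign_last R i_last) mulrN1 mulN1r (shift_corner _ _ i_last i0).
Qed.

Lemma lattice_invariant_col (R : realFieldType) n (p q : R) (S : 'M[R]_n) :
  (1 < n)%N -> 0 < p -> p < q -> signed_perm_mx S ->
  (forall x, mx_image S (lattice (Amx n p q)) x <-> lattice (Amx n p q) x) ->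
  forall k, exists m (e : R),
    e ^+ 2 = 1 /\ S *m col k (Amx n p q) = e *: col m (Amx n p q).
Proof.
move=> n_gt1 p_gt0 lt_pq S_signed S_inv k.
have [w Sa] : lattice (Amx n p q) (S *m col k (Amx n p q)).
  apply/S_inv; exists (col k (Amx n p q)); split => //.
  by exists (delta_mx k 0); rewrite map_delta_mx colE.
have w1 : sqnorm w = 1.
  apply: (Amx_int_sqnorm_eq1 p_gt0 lt_pq).
  rewrite -Sa sqnorm_orthogonal ?trmx_signed_perm_mulmx // col_Amx scalerA.
  by rewrite sqnorm_delta_pair 1?eq_sym ?ordS_neq // exprMn negacyclic_sign_sqr mulr1 addrC.
have [m [e [e2 w_eq]]] := sqnorm_int_eq1 w1.
exists m, e%:~R; split; first by rewrite -rmorphXn e2.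
by rewrite Sa w_eq map_mxZ map_delta_mx -scalemxAr colE.
Qed.

Lemma lattice_invariant_negacyclic_commute (R : realFieldType) n (p q : R)
    (S : 'M[R]_n) :
  (1 < n)%N -> 0 < p -> p < q -> signed_perm_mx S ->
  (forall x, mx_image S (lattice (Amx n p q)) x <-> lattice (Amx n p q) x) ->
  S *m negacyclic_mx n R = negacyclic_mx n R *m S.
Proof.
move=> n_gt1 p_gt0 lt_pq S_signed S_inv.
apply/trmx_inj/row_matrixP => k; rewrite -!tr_col; congr _^T.
have [m [e [e2 Sa]]] := lattice_invariant_col n_gt1 p_gt0 lt_pq S_signed S_inv k.
have [r [Srk Sk]] := signed_perm_col S_signed k.
have [r' [Sr'k' Sk']] := signed_perm_col S_signed (ordS k).
have rr' : r != r'.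
  apply: contra_neq (ordS_neq k n_gt1) => rr'.
  by move: Srk; rewrite rr' => Sr'k; apply: signed_perm_row_uniq Sr'k' Sr'k.
move: Sa; rewrite !col_Amx mulmxBr -!scalemxAr -!colE Sk Sk' scalerA scalerBr.
rewrite !scalerA [e * q]mulrC -[p * _ * S r' _]mulrA [e * p]mulrC -[p * e * _]mulrA.
have m_shift : m != ordS m by rewrite eq_sym ordS_neq.
have sgm2 : (e * negacyclic_sign R m) ^+ 2 = 1.
  by rewrite exprMn e2 negacyclic_sign_sqr mulr1.
have s2 := signed_perm_entry_sqr S_signed Srk.
case/(signed_delta_pair_uniq p_gt0 lt_pq rr' m_shift s2 sgm2) => <- <- shift_eq.
rewrite colE -mulmxA negacyclic_mx_delta -scalemxAr -colE Sk' scalerA shift_eq.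
by rewrite colE -mulmxA -colE Sk -scalemxAr negacyclic_mx_delta scalerA.
Qed.

Theorem theorem3 (R : realType) (n : nat) (hn : (2 <= n)%N) (p q : R)
  (hp : 0 < p) (hpq : p < q) (S : 'M[R]_n) (hS : signed_perm_mx S) :
  (forall x, mx_image S (lattice (Amx n p q)) x <-> lattice (Amx n p q) x) <->
  [/\ (forall i j i' j' : 'I_n, val i' = (val i).+1 -> val j' = (val j).+1 ->
          S i j = S i' j'),
      (forall i i' l f : 'I_n, val i' = (val i).+1 -> val l = n.-1 ->
          val f = 0%N -> S i l = - S i' f),
      (forall j j' l f : 'I_n, val j' = (val j).+1 -> val l = n.-1 ->
          val f = 0%N -> S l j = - S f j')
    & (forall l f : 'I_n, val l = n.-1 -> val f = 0%N -> S l l = S f f)].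
Proof.
apply: (iff_trans _ (negacyclic_commuteP S)).
split; first exact: lattice_invariant_negacyclic_commute.
move=> SC; have [U SU] := signed_perm_int hS.
have UtU : U^T *m U = 1%:M.
  apply/matrixP => i j; apply: (@intr_inj R).
  have := congr1 (fun M : 'M[R]_n => M i j) (trmx_signed_perm_mulmx hS).
  by rewrite SU map_trmx -map_mxM !mxE => ->; rewrite rmorph_nat.
have SA : S *m Amx n p q = Amx n p q *m S.
  by rewrite AmxE mulmxBr mulmxBl mul_mx_scalar mul_scalar_mx -scalemxAr -scalemxAl SC.
rewrite SU; apply: mx_image_lattice_int (mulmx1C UtU) _.
by rewrite -SU.
Qed.
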